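(* For $n\ge0$ let $Q_n=\{-1,0,+1\}^n$, so that $Q_0$ consists of the empty tuple $()$. On the graded vector space $\bigoplus_{n\ge1}K[Q_{n-1}]$ define, for $a\in Q_{p-1}$ and $b\in Q_{q-1}$ (and extended bilinearly), the following elements of $Q_{p+q-1}$, where $(a,\varepsilon,b)$ denotes concatenation: $$a\dashv b=(a,-1,b),\qquad a\perp b=(a,0,b),\qquad a\vdash b=(a,+1,b).$$ Then $\bigl(\bigoplus_{n\ge1}K[Q_{n-1}];\dashv,\vdash,\perp\bigr)$ is a cubical trialgebra. Moreover, it is the free cubical trialgebra on the one generator $()\in Q_0$: for any cubical trialgebra $A$ and any $a\in A$ there is a unique morphism of cubical trialgebras sending $()$ to $a$.
   Context: A cubical trialgebra is a $K$-vector space $A$ with three bilinear operations $\dashv,\vdash,\perp$ satisfying the nine relations $(x\circ_1y)\circ_2z=x\circ_1(y\circ_2z)$ for all $x,y,z\in A$ and all $\circ_1,\circ_2\in\{\dashv,\vdash,\perp\}$. Morphisms are linear maps preserving the three operations. *)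

From HB Require Import structures.
From mathcomp Require Import all_boot all_order all_algebra.
From mathcomp Require Import finmap.
From mathcomp.multinomials Require Import monalg.

Set Implicit Arguments.
Unset Strict Implicit.
Unset Printing Implicit Defensive.

Import GRing.Theory.
Local Open Scope ring_scope.

Inductive op3 := OpLeft | OpRight | OpPerp.

Definition bilinear_op (K : fieldType) (A : lmodType K) (m : A -> A -> A) :=
  (forall (c : K) x y z, m (c *: x + y) z = c *: m x z + m y z) /\
  (forall (c : K) x y z, m x (c *: y + z) = c *: m x y + m x z).

Definition cubical_trialgebra (K : fieldType) (A : lmodType K)
    (m : op3 -> A -> A -> A) : Prop :=
  (forall o, bilinear_op (m o)) /\
  (forall o1 o2 x y z, m o2 (m o1 x y) z = m o1 x (m o2 y z)).

Definition trialg_morphism (K : fieldType) (A B : lmodType K)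
    (mA : op3 -> A -> A -> A) (mB : op3 -> B -> B -> B) (f : A -> B) : Prop :=
  (forall (c : K) x y, f (c *: x + y) = c *: f x + f y) /\
  (forall o x y, f (mA o x y) = mB o (f x) (f y)).

Inductive trit := TMinus | TZero | TPlus.

Definition trit_to_nat (t : trit) : nat :=
  match t with TMinus => 0 | TZero => 1 | TPlus => 2 end.
Definition nat_to_trit (n : nat) : option trit :=
  match n with 0 => Some TMinus | 1 => Some TZero | 2 => Some TPlus | _ => None end.
Lemma trit_to_natK : pcancel trit_to_nat nat_to_trit.
Proof. by case. Qed.
HB.instance Definition _ := Countable.copy trit (pcan_type trit_to_natK).

(** Q_n is the set of sequences of trits of length n; the graded vector space
    (+)_{n>=1} K[Q_{n-1}] is the free K-vector space on all finite sequences
    of trits, i.e. the monoid-algebra-as-module {malg K[seq trit]}. *)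
Definition Qspace (K : fieldType) := {malg K[seq trit]}.

Definition sign_of (o : op3) : trit :=
  match o with OpLeft => TMinus | OpPerp => TZero | OpRight => TPlus end.

Definition Qop (K : fieldType) (o : op3) (x y : Qspace K) : Qspace K :=
  \sum_(u <- msupp x) \sum_(v <- msupp y)
     (x@_u * y@_v) *: << (u ++ sign_of o :: v) >>.

Definition Qunit (K : fieldType) : Qspace K := << [::] >>.

From HB Require Import structures.
From mathcomp Require Import all_boot all_order all_algebra.
From mathcomp Require Import finmap.
From mathcomp.multinomials Require Import monalg.

Set Implicit Arguments.
Unset Strict Implicit.
Unset Printing Implicit Defensive.
Import GRing.Theory.
Local Open Scope ring_scope.

(* Every operation concatenates cubes, inserting the trit of the operation at
   the junction, so all nine relations say (u, e1, v, e2, w) = (u, e1, v, e2, w)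
   on basis elements. Conversely, the cube (t1, ..., tn) is the left-nested
   product () o_t1 (() o_t2 (... (() o_tn ()))), so a morphism sending () to a
   is forced on the basis; evaluating this word in A and extending linearly
   gives the morphism, associativity being exactly what makes evaluation
   compatible with concatenation. *)

Section LinearExtension.
Variables (R : comNzRingType) (T : choiceType).
Local Notation M := {malg R[T]}.

Definition malg_lift (V : lmodType R) (h : T -> V) (x : M) : V :=
  \sum_(u <- msupp x) x@_u *: h u.

Lemma malg_liftEw (V : lmodType R) (h : T -> V) (x : M) (d : {fset T}) :
  (msupp x `<=` d)%fset -> malg_lift h x = \sum_(u <- d) x@_u *: h u.
Proof.
move=> le_xd; apply: big_fset_incl => // u _ /mcoeff_outdom ->.
by rewrite scale0r.
Qed.

Lemma malg_lift_linear (V : lmodType R) (h : T -> V) : linear (malg_lift h).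
Proof.
move=> c x y; set d := (msupp x `|` msupp y)%fset.
have le_xd : (msupp x `<=` d)%fset by apply: fsubsetUl.
have le_yd : (msupp y `<=` d)%fset by apply: fsubsetUr.
have le_cxyd : (msupp (c *: x + y) `<=` d)%fset.
  by apply: fsubset_trans (msuppD_le _ _) _; apply/fsetSU/msuppZ_le.
rewrite !(malg_liftEw h le_xd, malg_liftEw h le_yd, malg_liftEw h le_cxyd).
rewrite scaler_sumr -big_split /=; apply: eq_bigr => u _.
by rewrite mcoeffD mcoeffZ scalerDl scalerA.
Qed.

Lemma malg_lift_linear_fun (V : lmodType R) (c : R) (h g : T -> V) (x : M) :
  malg_lift (fun u => c *: h u + g u) x = c *: malg_lift h x + malg_lift g x.
Proof.
rewrite /malg_lift scaler_sumr -big_split /=; apply: eq_bigr => u _.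
by rewrite scalerDr !scalerA mulrC.
Qed.

Lemma malg_liftU (V : lmodType R) (h : T -> V) (u : T) :
  malg_lift h << u >> = h u.
Proof. by rewrite /malg_lift msuppU oner_eq0 big_seq_fset1 mcoeffUU scale1r. Qed.

Lemma linear_malg_lift (V : lmodType R) (F : M -> V) :
  linear F -> F =1 malg_lift (fun u => F << u >>).
Proof.
move=> linF x; rewrite {1}(monalgE x) /malg_lift.
have F0 : F 0 = 0.
  have := linF 1 0 0; rewrite !scale1r addr0 => /esym/(canRL (addrK _)).
  by rewrite subrr.
elim: (msupp x : seq T) => [|u s IHs]; first by rewrite !big_nil.
rewrite !big_cons.
have -> : << x@_u *g u >> = x@_u *: (<< u >> : M).
  by apply/malgP => v; rewrite mcoeffZ !mcoeffU mulr_natr.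
by rewrite linF IHs.
Qed.

Lemma linear_malg_eq (V : lmodType R) (F G : M -> V) :
  linear F -> linear G -> (forall u, F << u >> = G << u >>) -> F =1 G.
Proof.
move=> linF linG eqFG x; rewrite (linear_malg_lift linF) (linear_malg_lift linG).
by apply: eq_bigr => u _; rewrite eqFG.
Qed.

End LinearExtension.

Section CubeOperations.
Variable K : fieldType.
Local Notation Q := (Qspace K).

Lemma QopE o (x y : Q) :
  Qop o x y = malg_lift (fun u => malg_lift (fun v => << u ++ sign_of o :: v >>) y) x.
Proof.
apply: eq_bigr => u _; rewrite scaler_sumr.
by apply: eq_bigr => v _; rewrite scalerA.
Qed.

Lemma Qop_linearl o (y : Q) : linear (Qop o ^~ y).
Proof. by move=> c x z; rewrite /= !QopE malg_lift_linear. Qed.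

Lemma Qop_linearr o (x : Q) : linear (Qop o x).
Proof.
move=> c y z; rewrite !QopE -malg_lift_linear_fun.
by apply: eq_bigr => u _; rewrite malg_lift_linear.
Qed.

Lemma QopU o u v : Qop o (<< u >> : Q) << v >> = << u ++ sign_of o :: v >>.
Proof. by rewrite QopE !malg_liftU. Qed.

Lemma Qop_cubical : cubical_trialgebra (@Qop K).
Proof.
split=> [o | o1 o2 x y z].
  by split=> c *; [apply: Qop_linearl | apply: Qop_linearr].
move: x; apply: linear_malg_eq => [c x x' | c x x' | u] /=.
- by rewrite !Qop_linearl.
- by rewrite !Qop_linearl.
move: y; apply: linear_malg_eq => [c y y' | c y y' | v] /=.
- by rewrite Qop_linearr !Qop_linearl.
- by rewrite Qop_linearl Qop_linearr.
move: z; apply: linear_malg_eq => [c z z' | c z z' | w] /=.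
- by rewrite !Qop_linearr.
- by rewrite !Qop_linearr.
by rewrite !QopU -catA.
Qed.

Definition op_of_trit (t : trit) : op3 :=
  match t with TMinus => OpLeft | TZero => OpPerp | TPlus => OpRight end.

Lemma op_of_tritK : cancel op_of_trit sign_of. Proof. by case. Qed.
Lemma sign_ofK : cancel sign_of op_of_trit. Proof. by case. Qed.

Lemma Qunit_cons t u :
  << t :: u >> = Qop (op_of_trit t) (Qunit K) << u >>.
Proof. by rewrite QopU op_of_tritK. Qed.

End CubeOperations.

Section FreeCubicalTrialgebra.
Variables (K : fieldType) (A : lmodType K) (m : op3 -> A -> A -> A) (a : A).
Hypothesis m_cubical : cubical_trialgebra m.

Definition cube_eval : seq trit -> A := foldr (fun t y => m (op_of_trit t) a y) a.

Lemma cube_eval_cat o u v :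
  cube_eval (u ++ sign_of o :: v) = m o (cube_eval u) (cube_eval v).
Proof.
have [_ m_assoc] := m_cubical.
by elim: u => [|t u IHu] /=; rewrite ?sign_ofK // IHu m_assoc.
Qed.

Lemma cube_eval_morphism :
  trialg_morphism (@Qop K) m (malg_lift cube_eval).
Proof.
have [m_lin _] := m_cubical.
split=> [|o x y]; first exact: malg_lift_linear.
have [mlinl mlinr] := m_lin o.
move: x; apply: linear_malg_eq => [c x x' | c x x' | u] /=.
- by rewrite Qop_linearl malg_lift_linear.
- by rewrite malg_lift_linear mlinl.
move: y; apply: linear_malg_eq => [c y y' | c y y' | v] /=.
- by rewrite Qop_linearr malg_lift_linear.
- by rewrite malg_lift_linear mlinr.
by rewrite QopU !malg_liftU cube_eval_cat.
Qed.

Lemma trialg_morphism_cube (f : Qspace K -> A) :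
  trialg_morphism (@Qop K) m f -> f (Qunit K) = a ->
  forall u, f << u >> = cube_eval u.
Proof.
move=> [_ f_morph] f_unit; elim=> [|t u IHu] //=.
by rewrite Qunit_cons f_morph f_unit IHu.
Qed.

End FreeCubicalTrialgebra.

Theorem proposition5p2 (K : fieldType) :
  cubical_trialgebra (@Qop K) /\
  (forall (A : lmodType K) (m : op3 -> A -> A -> A) (a : A),
     cubical_trialgebra m ->
     (exists f : Qspace K -> A,
        trialg_morphism (@Qop K) m f /\ f (Qunit K) = a) /\
     (forall f g : Qspace K -> A,
        trialg_morphism (@Qop K) m f -> f (Qunit K) = a ->
        trialg_morphism (@Qop K) m g -> g (Qunit K) = a ->
        f =1 g)).
Proof.
split=> [|A m a m_cubical]; first exact: Qop_cubical.
split.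
  exists (malg_lift (cube_eval m a)); split; first exact: cube_eval_morphism.
  exact: malg_liftU.
move=> f g f_morph f_unit g_morph g_unit.
apply: linear_malg_eq; [exact: f_morph.1 | exact: g_morph.1 |] => u.
by rewrite (trialg_morphism_cube f_morph f_unit) (trialg_morphism_cube g_morph g_unit).
Qed.
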